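(* Let $X\neq\{0\}$ be a normed space. (i) If $X$ satisfies the $t$-Hanner inequality for some $1<t\le2$, then $K^*_{q,t}(X)=C^*(q,t)$ for every $2\le q<\infty$, and $K_{t,p}(X)=1$ for every $1<p\le t'$, where $\frac1t+\frac1{t'}=1$. (ii) If $X$ satisfies the $r$-Hanner inequality for some $2\le r<\infty$, then $K_{p,r}(X)=C(p,r)$ for every $1<p\le2$, and $K^*_{r,q}(X)=1$ for every $r'\le q<\infty$, where $\frac1r+\frac1{r'}=1$.
   Context: For $1<t\le2$, a normed space $X$ satisfies the $t$-Hanner inequality if $\|x+y\|^t+\|x-y\|^t\ge(\|x\|+\|y\|)^t+\big|\|x\|-\|y\|\big|^t$ for all $x,y\in X$; for $2\le r<\infty$, it satisfies the $r$-Hanner inequality if $\|x+y\|^r+\|x-y\|^r\le(\|x\|+\|y\|)^r+\big|\|x\|-\|y\|\big|^r$ for all $x,y\in X$. For a normed space $X$: for $1<t\le2$ and $1<p<\infty$, $K_{t,p}(X)$ is the smallest constant $K\ge0$ such that $\big(\frac{\|x+y\|^p+\|x-y\|^p}{2}\big)^{1/p}\le(\|x\|^t+\|Ky\|^t)^{1/t}$ for all $x,y\in X$; for $2\le r<\infty$ and $1<q<\infty$, $K^*_{r,q}(X)$ is the smallest constant $K>0$ such that $\big(\frac{\|x+y\|^q+\|x-y\|^q}{2}\big)^{1/q}\ge(\|x\|^r+\|K^{-1}y\|^r)^{1/r}$ for all $x,y\in X$. $C(t,p):=K_{t,p}(\mathbb C)$ and $C^*(r,q):=K^*_{r,q}(\mathbb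 C)$, i.e. the same best constants for $X=\mathbb C$ with the absolute value. *)

From Stdlib Require Import Reals Lra.
Open Scope R_scope.

(** Real normed spaces.  (A complex normed space is in particular a real one,
    and all notions below only use +, -, real scalars and the norm.) *)
Record NormedSpace := {
  carrier :> Type;
  vzero : carrier;
  vadd : carrier -> carrier -> carrier;
  vopp : carrier -> carrier;
  vscal : R -> carrier -> carrier;
  vnorm : carrier -> R;
  vadd_assoc : forall x y z, vadd x (vadd y z) = vadd (vadd x y) z;
  vadd_comm : forall x y, vadd x y = vadd y x;
  vadd_0 : forall x, vadd x vzero = x;
  vadd_opp : forall x, vadd x (vopp x) = vzero;
  vscal_1 : forall x, vscal 1 x = x;
  vscal_assoc : forall a b x, vscal a (vscal b x) = vscal (a * b) x;
  vscal_distr_l : forall a x y, vscal a (vadd x y) = vadd (vscal a x) (vscal a y);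
  vscal_distr_r : forall a b x, vscal (a + b) x = vadd (vscal a x) (vscal b x);
  vnorm_eq0 : forall x, vnorm x = 0 -> x = vzero;
  vnorm_scal : forall a x, vnorm (vscal a x) = Rabs a * vnorm x;
  vnorm_triangle : forall x y, vnorm (vadd x y) <= vnorm x + vnorm y
}.

Definition vsub (X : NormedSpace) (x y : X) : X := vadd X x (vopp X y).

(** Real power x^a for x >= 0 and a > 0, with 0^a = 0
    (Stdlib's Rpower is only meaningful for x > 0). *)
Definition rpow (x a : R) : R := if Rle_dec x 0 then 0 else Rpower x a.

Definition Cc := (R * R)%type.
Definition cadd (z w : Cc) : Cc := (fst z + fst w, snd z + snd w).
Definition csub (z w : Cc) : Cc := (fst z - fst w, snd z - snd w).
Definition cscal (a : R) (z : Cc) : Cc := (a * fst z, a * snd z).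
Definition cabs (z : Cc) : R := sqrt (fst z * fst z + snd z * snd z).

Definition hanner_t (X : NormedSpace) (t : R) : Prop :=
  forall x y : X,
    rpow (vnorm X (vadd X x y)) t + rpow (vnorm X (vsub X x y)) t >=
    rpow (vnorm X x + vnorm X y) t + rpow (Rabs (vnorm X x - vnorm X y)) t.

Definition hanner_r (X : NormedSpace) (r : R) : Prop :=
  forall x y : X,
    rpow (vnorm X (vadd X x y)) r + rpow (vnorm X (vsub X x y)) r <=
    rpow (vnorm X x + vnorm X y) r + rpow (Rabs (vnorm X x - vnorm X y)) r.

(** Validity of a constant K, stated generically over the operations
    (plus, minus, real scaling, norm) so that it applies both to a normed
    space X and to C with the absolute value. *)
Definition K_valid {V : Type} (add sub : V -> V -> V) (scal : R -> V -> V)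
  (nrm : V -> R) (t p K : R) : Prop :=
  forall x y : V,
    rpow ((rpow (nrm (add x y)) p + rpow (nrm (sub x y)) p) / 2) (1 / p) <=
    rpow (rpow (nrm x) t + rpow (nrm (scal K y)) t) (1 / t).

Definition Kstar_valid {V : Type} (add sub : V -> V -> V) (scal : R -> V -> V)
  (nrm : V -> R) (r q K : R) : Prop :=
  forall x y : V,
    rpow ((rpow (nrm (add x y)) q + rpow (nrm (sub x y)) q) / 2) (1 / q) >=
    rpow (rpow (nrm x) r + rpow (nrm (scal (/ K) y)) r) (1 / r).

Definition is_best_K {V : Type} (add sub : V -> V -> V) (scal : R -> V -> V)
  (nrm : V -> R) (t p k : R) : Prop :=
  0 <= k /\ K_valid add sub scal nrm t p k /\
  forall k', 0 <= k' -> K_valid add sub scal nrm t p k' -> k <= k'.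

Definition is_best_Kstar {V : Type} (add sub : V -> V -> V) (scal : R -> V -> V)
  (nrm : V -> R) (r q k : R) : Prop :=
  0 < k /\ Kstar_valid add sub scal nrm r q k /\
  forall k', 0 < k' -> Kstar_valid add sub scal nrm r q k' -> k <= k'.

Definition is_K_tp (X : NormedSpace) (t p k : R) : Prop :=
  is_best_K (vadd X) (vsub X) (vscal X) (vnorm X) t p k.
Definition is_Kstar_rq (X : NormedSpace) (r q k : R) : Prop :=
  is_best_Kstar (vadd X) (vsub X) (vscal X) (vnorm X) r q k.
Definition is_C (t p k : R) : Prop := is_best_K cadd csub cscal cabs t p k.
Definition is_Cstar (r q k : R) : Prop := is_best_Kstar cadd csub cscal cabs r q k.

From Stdlib Require Import Reals Lra Psatz.
Open Scope R_scope.

(** Write [M_p(u,v) = ((u^p + v^p)/2)^(1/p)] ([pmean]) and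
    [||(u,v)||_t = (u^t + v^t)^(1/t)] ([lnorm]).

    - "Same constant as for C": a Hanner inequality bounds [M_p(|x+y|,|x-y|)]
      by [M_p(|x|+|y|, ||x|-|y||)], with equality when [x, y] lie on a line.
      Hence in any space containing a line and satisfying the relevant
      Hanner inequality, validity of [K] is equivalent to one inequality
      between nonnegative reals.  Both [X] and [C] are such spaces (for [C]
      via the parallelogram law and a majorization argument), so they have
      the same least constant.
    - "Constant 1": applying the Hanner inequality to [(x+y, x-y)] and a
      Clarkson-type inequality [2(a^P' + b^P')^(P-1) <= (a+b)^P + |a-b|^P]
      ([1 < P <= 2]) compares [M_t'] (resp. [M_r']) of [(|x+y|,|x-y|)] with
      [||(|x|,|y|)||_t]; monotonicity of power means handles the other
      exponents, and [x = 0] shows that no constant below 1 works.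

    The real-variable tools all come from one fact: for [d >= 0] the increment
    [u |-> (u+d)^g - u^g] is monotone, in a direction given by the sign of
    [g - 1] (mean value theorem). *)

(** * Real powers *)

Lemma rpow_pos x a : 0 < x -> rpow x a = Rpower x a.
Proof. intro Hx; unfold rpow; destruct (Rle_dec x 0); [lra | reflexivity]. Qed.

Lemma rpow_0 a : rpow 0 a = 0.
Proof. unfold rpow; destruct (Rle_dec 0 0); [reflexivity | lra]. Qed.

Lemma Rpower_gt0 x a : 0 < Rpower x a.
Proof. apply exp_pos. Qed.

Lemma rpow_nonneg x a : 0 <= rpow x a.
Proof. unfold rpow; destruct (Rle_dec x 0); [lra | left; apply Rpower_gt0]. Qed.

Lemma rpow_gt0 x a : 0 < x -> 0 < rpow x a.
Proof. intro Hx; rewrite rpow_pos by exact Hx; apply Rpower_gt0. Qed.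

Lemma rpow_1 x : 0 <= x -> rpow x 1 = x.
Proof.
  intros [Hx | <-]; [rewrite rpow_pos by exact Hx; apply Rpower_1 | apply rpow_0]; auto.
Qed.

Lemma rpow_one a : rpow 1 a = 1.
Proof. rewrite rpow_pos by lra; unfold Rpower; rewrite ln_1, Rmult_0_r; apply exp_0. Qed.

Lemma rpow_mult x y a : 0 <= x -> 0 <= y -> rpow (x * y) a = rpow x a * rpow y a.
Proof.
  intros [Hx | <-] [Hy | <-]; rewrite ?Rmult_0_l, ?Rmult_0_r, ?rpow_0; try ring.
  rewrite !rpow_pos by nra; symmetry; apply Rpower_mult_distr; auto.
Qed.

Lemma rpow_rpow x a b : 0 <= x -> rpow (rpow x a) b = rpow x (a * b).
Proof.
  intros [Hx | <-]; [| rewrite !rpow_0; reflexivity].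
  rewrite (rpow_pos x a), rpow_pos, (rpow_pos x) by (auto; apply Rpower_gt0).
  apply Rpower_mult.
Qed.

Lemma rpow_plus x a b : 0 <= x -> rpow x (a + b) = rpow x a * rpow x b.
Proof.
  intros [Hx | <-]; [rewrite !rpow_pos by exact Hx; apply Rpower_plus | rewrite !rpow_0; ring].
Qed.

Lemma rpow_le x y a : 0 <= x <= y -> 0 < a -> rpow x a <= rpow y a.
Proof.
  intros [[Hx | <-] Hxy] Ha; [| rewrite rpow_0; apply rpow_nonneg].
  rewrite !rpow_pos by lra; apply Rle_Rpower_l; lra.
Qed.

Lemma rpow_div x y a : 0 <= x -> 0 < y -> rpow (x / y) a = rpow x a / rpow y a.
Proof.
  intros Hx Hy; unfold Rdiv.
  rewrite rpow_mult by (auto; left; apply Rinv_0_lt_compat; exact Hy).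
  assert (Hiy : 0 < / y) by (apply Rinv_0_lt_compat; exact Hy).
  rewrite (rpow_pos (/ y)), (rpow_pos y) by assumption.
  unfold Rpower; rewrite ln_Rinv, <- exp_Ropp by exact Hy; f_equal; f_equal; ring.
Qed.

Lemma rpow_sq s e : 0 <= s -> rpow s e = rpow (s * s) (e / 2).
Proof. intro Hs; rewrite rpow_mult, <- rpow_plus by exact Hs; f_equal; field. Qed.

Lemma rpow_two_split e : rpow 2 e = 2 * rpow 2 (e - 1).
Proof. replace e with (1 + (e - 1)) at 1 by ring; rewrite rpow_plus, rpow_1 by lra; ring. Qed.

Lemma Rpower_antitone_exponent s g g' : 0 < s <= 1 -> g <= g' -> Rpower s g' <= Rpower s g.
Proof.
  intros Hs Hg; unfold Rpower.
  assert (Hln : ln s <= 0).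
  { destruct (Req_dec s 1) as [-> | Hs1]; [rewrite ln_1; lra |].
    left; rewrite <- ln_1; apply ln_increasing; lra. }
  destruct (Req_dec (g' * ln s) (g * ln s)) as [E | NE]; [rewrite E; lra |].
  left; apply exp_increasing; nra.
Qed.

Lemma Rpower_antitone_base x y g : 0 < x <= y -> g <= 0 -> Rpower y g <= Rpower x g.
Proof.
  intros Hxy Hg; unfold Rpower.
  assert (Hln : ln x <= ln y).
  { destruct (Req_dec x y) as [-> | Nxy]; [lra | left; apply ln_increasing; lra]. }
  destruct (Req_dec (g * ln y) (g * ln x)) as [E | NE]; [rewrite E; lra |].
  left; apply exp_increasing; nra.
Qed.

(** * Increments of [u |-> u^g] *)

Lemma deriv_Rpower_comp f f' g x : 0 < f x -> derivable_pt_lim f x f' ->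
  derivable_pt_lim (fun w => Rpower (f w) g) x (g * Rpower (f x) (g - 1) * f').
Proof.
  intros Hfx Hf.
  apply (derivable_pt_lim_comp f (fun v => Rpower v g)); [exact Hf |].
  apply derivable_pt_lim_power; exact Hfx.
Qed.

Lemma deriv_const_add a x : derivable_pt_lim (fun w => a + w) x 1.
Proof.
  replace 1 with (0 + 1) by ring.
  apply (derivable_pt_lim_plus (fun _ => a) id);
    [apply derivable_pt_lim_const | apply derivable_pt_lim_id].
Qed.

Lemma deriv_const_sub a x : derivable_pt_lim (fun w => a - w) x (-1).
Proof.
  replace (-1) with (0 - 1) by ring.
  apply (derivable_pt_lim_minus (fun _ => a) id);
    [apply derivable_pt_lim_const | apply derivable_pt_lim_id].
Qed.

Lemma nondecreasing_of_deriv f f' a b : a <= b ->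
  (forall c, a <= c <= b -> derivable_pt_lim f c (f' c)) ->
  (forall c, a < c < b -> 0 <= f' c) -> f a <= f b.
Proof.
  intros [Hab | <-] Hder Hpos; [| lra].
  destruct (MVT_cor2 f f' a b Hab Hder) as [c [E Hc]].
  specialize (Hpos c Hc); nra.
Qed.

Lemma increment_mvt u1 u2 d g : 0 < u1 <= u2 -> 0 <= d ->
  exists c, 0 < c /\
   (rpow (u2 + d) g - rpow u2 g) - (rpow (u1 + d) g - rpow u1 g)
   = g * (Rpower (c + d) (g - 1) - Rpower c (g - 1)) * (u2 - u1).
Proof.
  intros [Hu1 [Hu12 | <-]] Hd; [| exists u1; split; [lra | ring]].
  destruct (MVT_cor2 (fun u => Rpower (d + u) g - Rpower u g)
             (fun c => g * Rpower (d + c) (g - 1) * 1 - g * Rpower c (g - 1)) u1 u2)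
    as [c [E Hc]]; [exact Hu12 | |].
  - intros c Hc; apply derivable_pt_lim_minus.
    + apply (deriv_Rpower_comp (fun w => d + w)); [lra | apply deriv_const_add].
    + apply derivable_pt_lim_power; lra.
  - exists c; split; [lra |].
    rewrite !rpow_pos, (Rplus_comm u2 d), (Rplus_comm u1 d), (Rplus_comm c d), E by lra; ring.
Qed.

Lemma rpow_sum_weights u d g : 0 < u -> 0 < d ->
  rpow u g + rpow d g = rpow (u + d) g * (rpow (u / (u + d)) g + rpow (d / (u + d)) g).
Proof.
  intros Hu Hd; rewrite !rpow_div by lra.
  assert (0 < rpow (u + d) g) by (apply rpow_gt0; lra).
  field; lra.
Qed.

Lemma weight_unit u d : 0 < u -> 0 < d -> 0 < u / (u + d) <= 1.
Proof.
  intros Hu Hd; split; [apply Rdiv_lt_0_compat; lra |].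
  apply Rmult_le_reg_r with (u + d); [lra | field_simplify; lra].
Qed.

Lemma rpow_unit_ge s g : 0 < s <= 1 -> g <= 1 -> s <= rpow s g.
Proof.
  intros Hs Hg; rewrite rpow_pos by lra; rewrite <- (Rpower_1 s) at 1 by lra.
  apply Rpower_antitone_exponent; lra.
Qed.

Lemma rpow_unit_le s g : 0 < s <= 1 -> 1 <= g -> rpow s g <= s.
Proof.
  intros Hs Hg; rewrite rpow_pos by lra; rewrite <- (Rpower_1 s) at 2 by lra.
  apply Rpower_antitone_exponent; lra.
Qed.

Lemma rpow_subadditive u d g : g <= 1 -> 0 <= u -> 0 <= d ->
  rpow (u + d) g <= rpow u g + rpow d g.
Proof.
  intros Hg [Hu | <-] [Hd | <-]; rewrite ?Rplus_0_l, ?Rplus_0_r, ?rpow_0; try lra.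
  rewrite rpow_sum_weights by assumption.
  pose proof (rpow_unit_ge _ g (weight_unit u d Hu Hd) Hg).
  pose proof (rpow_unit_ge _ g (weight_unit d u Hd Hu) Hg).
  assert (u / (u + d) + d / (u + d) = 1) by (field; lra).
  assert (0 < rpow (u + d) g) by (apply rpow_gt0; lra).
  rewrite (Rplus_comm d u) in *; nra.
Qed.

Lemma rpow_superadditive u d g : 1 <= g -> 0 <= u -> 0 <= d ->
  rpow u g + rpow d g <= rpow (u + d) g.
Proof.
  intros Hg [Hu | <-] [Hd | <-]; rewrite ?Rplus_0_l, ?Rplus_0_r, ?rpow_0; try lra.
  rewrite rpow_sum_weights by assumption.
  pose proof (rpow_unit_le _ g (weight_unit u d Hu Hd) Hg).
  pose proof (rpow_unit_le _ g (weight_unit d u Hd Hu) Hg).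
  assert (u / (u + d) + d / (u + d) = 1) by (field; lra).
  assert (0 < rpow (u + d) g) by (apply rpow_gt0; lra).
  rewrite (Rplus_comm d u) in *; nra.
Qed.

Lemma increment_antitone u1 u2 d g : 0 < g <= 1 -> 0 <= u1 <= u2 -> 0 <= d ->
  rpow (u2 + d) g - rpow u2 g <= rpow (u1 + d) g - rpow u1 g.
Proof.
  intros Hg [[Hu1 | <-] Hu12] Hd.
  - destruct (increment_mvt u1 u2 d g) as [c [Hc E]]; [lra | exact Hd |].
    assert (Rpower (c + d) (g - 1) <= Rpower c (g - 1))
      by (apply Rpower_antitone_base; lra).
    assert (0 <= g * (Rpower c (g - 1) - Rpower (c + d) (g - 1)) * (u2 - u1))
      by (apply Rmult_le_pos; [apply Rmult_le_pos |]; lra).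
    lra.
  - rewrite Rplus_0_l, rpow_0; pose proof (rpow_subadditive u2 d g); lra.
Qed.

Lemma increment_monotone u1 u2 d g : 1 <= g -> 0 <= u1 <= u2 -> 0 <= d ->
  rpow (u1 + d) g - rpow u1 g <= rpow (u2 + d) g - rpow u2 g.
Proof.
  intros Hg [[Hu1 | <-] Hu12] Hd.
  - destruct (increment_mvt u1 u2 d g) as [c [Hc E]]; [lra | exact Hd |].
    assert (Rpower c (g - 1) <= Rpower (c + d) (g - 1))
      by (apply Rle_Rpower_l; lra).
    assert (0 <= g * (Rpower (c + d) (g - 1) - Rpower c (g - 1)) * (u2 - u1))
      by (apply Rmult_le_pos; [apply Rmult_le_pos |]; lra).
    lra.
  - rewrite Rplus_0_l, rpow_0; pose proof (rpow_superadditive u2 d g); lra.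
Qed.

Lemma symmetric_sum_abs A c g :
  rpow (A + c) g + rpow (A - c) g = rpow (A + Rabs c) g + rpow (A - Rabs c) g.
Proof.
  unfold Rabs; destruct (Rcase_abs c); [| reflexivity].
  replace (A - - c) with (A + c) by ring; replace (A + - c) with (A - c) by ring; lra.
Qed.

Lemma symmetric_sum_concave A B c g : 0 < g <= 1 -> Rabs c <= B -> B <= A ->
  rpow (A + B) g + rpow (A - B) g <= rpow (A + c) g + rpow (A - c) g.
Proof.
  intros Hg Hc HB; rewrite (symmetric_sum_abs A c g); pose proof (Rabs_pos c) as Hc0.
  pose proof (increment_antitone (A - B) (A + Rabs c) (B - Rabs c) g Hg
                ltac:(lra) ltac:(lra)) as Hinc.
  replace (A + Rabs c + (B - Rabs c)) with (A + B) in Hinc by ring.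
  replace (A - B + (B - Rabs c)) with (A - Rabs c) in Hinc by ring.
  lra.
Qed.

Lemma symmetric_sum_convex A B c g : 1 <= g -> Rabs c <= B -> B <= A ->
  rpow (A + c) g + rpow (A - c) g <= rpow (A + B) g + rpow (A - B) g.
Proof.
  intros Hg Hc HB; rewrite (symmetric_sum_abs A c g); pose proof (Rabs_pos c) as Hc0.
  pose proof (increment_monotone (A - B) (A + Rabs c) (B - Rabs c) g Hg
                ltac:(lra) ltac:(lra)) as Hinc.
  replace (A + Rabs c + (B - Rabs c)) with (A + B) in Hinc by ring.
  replace (A - B + (B - Rabs c)) with (A - Rabs c) in Hinc by ring.
  lra.
Qed.

Lemma midpoint_convex u v g : 1 <= g -> 0 <= u -> 0 <= v ->
  rpow ((u + v) / 2) g <= (rpow u g + rpow v g) / 2.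
Proof.
  intros Hg Hu Hv.
  pose proof (symmetric_sum_convex ((u + v) / 2) (Rabs (u - v) / 2) 0 g Hg) as H.
  rewrite Rplus_0_r, Rminus_0_r, Rabs_R0 in H.
  assert (Huv : rpow ((u + v) / 2 + Rabs (u - v) / 2) g
                + rpow ((u + v) / 2 - Rabs (u - v) / 2) g = rpow u g + rpow v g).
  { unfold Rabs; destruct (Rcase_abs (u - v)).
    - rewrite Rplus_comm; f_equal; f_equal; field.
    - f_equal; f_equal; field. }
  rewrite Huv in H.
  assert (Rabs (u - v) / 2 <= (u + v) / 2)
    by (unfold Rabs; destruct (Rcase_abs (u - v)); lra).
  pose proof (Rabs_pos (u - v)); specialize (H ltac:(lra) ltac:(lra)); lra.
Qed.

Definition pmean (p u v : R) : R := rpow ((rpow u p + rpow v p) / 2) (1 / p).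

Definition lnorm (t u v : R) : R := rpow (rpow u t + rpow v t) (1 / t).

Lemma pmean_monotone p p' u v : 0 < p <= p' -> 0 <= u -> 0 <= v ->
  pmean p u v <= pmean p' u v.
Proof.
  intros Hp Hu Hv; unfold pmean.
  assert (Hpow : forall w, 0 <= w -> rpow w p' = rpow (rpow w p) (p' / p))
    by (intros w Hw; rewrite rpow_rpow by exact Hw; f_equal; field; lra).
  rewrite (Hpow u Hu), (Hpow v Hv).
  assert (Hconv : rpow ((rpow u p + rpow v p) / 2) (p' / p)
                  <= (rpow (rpow u p) (p' / p) + rpow (rpow v p) (p' / p)) / 2).
  { apply midpoint_convex; try apply rpow_nonneg.
    apply Rmult_le_reg_r with p; [lra | field_simplify; lra]. }
  assert (Hm : 0 <= (rpow u p + rpow v p) / 2)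
    by (pose proof (rpow_nonneg u p); pose proof (rpow_nonneg v p); lra).
  replace (1 / p) with (p' / p * (1 / p')) by (field; lra).
  rewrite <- rpow_rpow by exact Hm.
  apply rpow_le; [split; [apply rpow_nonneg | exact Hconv] | apply Rdiv_lt_0_compat; lra].
Qed.

(** * A Clarkson-type inequality

    For [1 < P <= 2] with conjugate exponent [P' = P/(P-1)] and [a, b >= 0],
      [(a^P' + b^P')^(P-1) <= ((a+b)^P + |a-b|^P) / 2].
    By homogeneity it suffices to take [a = 1], [b = y] in [[0,1]]. With
    [r = P-1] and [z = y^P'] (so that [z^r = y^P]) one compares
      [F(w) = (1+w)^P + (1-w)^P - 2k w^P],  [k = gap(z) / z^r],
    at [w = z] and [w = y]: [F] is nondecreasing on [[z,y]] because
    [gap(w)/w^r] is nondecreasing, where [gap(w) = ((1+w)^r - (1-w)^r)/2]. *)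

Definition clarkson_gap (r w : R) : R := (Rpower (1 + w) r - Rpower (1 - w) r) / 2.

Lemma clarkson_gap_ratio r w : 0 < w < 1 ->
  clarkson_gap r w / Rpower w r = (rpow (/ w - 1 + 2) r - rpow (/ w - 1) r) / 2.
Proof.
  intros Hw; unfold clarkson_gap.
  replace (/ w - 1 + 2) with ((1 + w) / w) by (field; lra).
  replace (/ w - 1) with ((1 - w) / w) by (field; lra).
  rewrite !rpow_div, !rpow_pos by lra.
  assert (0 < Rpower w r) by apply Rpower_gt0.
  field; lra.
Qed.

Lemma clarkson_gap_ratio_monotone r z c : 0 < r <= 1 -> 0 < z <= c -> c < 1 ->
  clarkson_gap r z / Rpower z r <= clarkson_gap r c / Rpower c r.
Proof.
  intros Hr Hzc Hc; rewrite !clarkson_gap_ratio by lra.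
  assert (Hinv : / c <= / z) by (apply Rinv_le_contravar; lra).
  assert (1 < / c) by (rewrite <- Rinv_1; apply Rinv_lt_contravar; lra).
  pose proof (increment_antitone (/ c - 1) (/ z - 1) 2 r Hr ltac:(lra) ltac:(lra)); lra.
Qed.

Lemma clarkson_identity r z : -1 < z < 1 ->
  Rpower (1 + z) r = (Rpower (1 + z) (r + 1) + Rpower (1 - z) (r + 1)) / 2
                     + (1 - z) * clarkson_gap r z.
Proof.
  intros Hz; unfold clarkson_gap.
  rewrite !Rpower_plus, !Rpower_1 by lra; field.
Qed.

Lemma clarkson_unit_open P y : 1 < P <= 2 -> 0 < y < 1 ->
  Rpower (1 + Rpower y (P / (P - 1))) (P - 1) <= (Rpower (1 + y) P + Rpower (1 - y) P) / 2.
Proof.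
  intros HP Hy.
  set (z := Rpower y (P / (P - 1))); set (r := P - 1).
  assert (Hr : 0 < r <= 1) by (unfold r; lra).
  assert (Hz0 : 0 < z) by apply Rpower_gt0.
  assert (Hzy : z < y).
  { assert (1 < P / (P - 1)) by (apply Rmult_lt_reg_r with (P - 1); [| field_simplify]; lra).
    assert (ln y < 0) by (rewrite <- ln_1; apply ln_increasing; lra).
    unfold z, Rpower; rewrite <- (exp_ln y) at 2 by lra.
    apply exp_increasing; nra. }
  assert (Hzr : Rpower y P = Rpower z r)
    by (unfold z, r; rewrite Rpower_mult; f_equal; field; lra).
  assert (HzP : Rpower z P = z * Rpower z r)
    by (unfold r; rewrite <- (Rpower_1 z) at 2 by lra; rewrite <- Rpower_plus; f_equal; ring).
  set (k := clarkson_gap r z / Rpower z r).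
  assert (Hk : 0 < Rpower z r) by apply Rpower_gt0.
  assert (HF : (Rpower (1 + z) P + Rpower (1 - z) P) - 2 * k * Rpower z P
               <= (Rpower (1 + y) P + Rpower (1 - y) P) - 2 * k * Rpower y P).
  { apply (nondecreasing_of_deriv
      (fun w => Rpower (1 + w) P + Rpower (1 - w) P - 2 * k * Rpower w P)
      (fun c => P * Rpower (1 + c) (P - 1) * 1 + P * Rpower (1 - c) (P - 1) * (-1)
                - 2 * k * (P * Rpower c (P - 1)))); [lra | |].
    - intros c Hc; apply derivable_pt_lim_minus; [apply derivable_pt_lim_plus |].
      + apply (deriv_Rpower_comp (fun w => 1 + w)); [lra | apply deriv_const_add].
      + apply (deriv_Rpower_comp (fun w => 1 - w)); [lra | apply deriv_const_sub].
      + apply derivable_pt_lim_scal, derivable_pt_lim_power; lra.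
    - intros c Hc.
      assert (Hc' : 0 < Rpower c r) by apply Rpower_gt0.
      pose proof (clarkson_gap_ratio_monotone r z c Hr ltac:(lra) ltac:(lra)) as Hmono.
      fold k in Hmono; apply Rmult_le_compat_r with (r := Rpower c r) in Hmono; [| lra].
      unfold Rdiv in Hmono; rewrite Rmult_assoc, Rinv_l, Rmult_1_r in Hmono by lra.
      unfold clarkson_gap in Hmono; fold r; nra. }
  rewrite Hzr, HzP in HF.
  pose proof (clarkson_identity r z ltac:(lra)) as Hid.
  replace (r + 1) with P in Hid by (unfold r; ring).
  assert (Hkz : k * Rpower z r = clarkson_gap r z) by (unfold k; field; lra).
  nra.
Qed.

Lemma clarkson_unit P y : 1 < P <= 2 -> 0 <= y <= 1 ->
  rpow (1 + rpow y (P / (P - 1))) (P - 1) <= (rpow (1 + y) P + rpow (1 - y) P) / 2.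
Proof.
  intros HP Hy.
  destruct (Req_dec y 0) as [-> | Hy0].
  { rewrite rpow_0, Rplus_0_r, Rminus_0_r, !rpow_one; lra. }
  destruct (Req_dec y 1) as [-> | Hy1].
  { rewrite rpow_one, Rminus_diag, rpow_0; replace (1 + 1) with 2 by ring.
    rewrite (rpow_two_split P); lra. }
  assert (0 < Rpower y (P / (P - 1))) by apply Rpower_gt0.
  rewrite (rpow_pos y), !rpow_pos by lra; apply clarkson_unit_open; lra.
Qed.

Lemma clarkson_ineq P a b : 1 < P <= 2 -> 0 <= a -> 0 <= b ->
  rpow (rpow a (P / (P - 1)) + rpow b (P / (P - 1))) (P - 1)
  <= (rpow (a + b) P + rpow (Rabs (a - b)) P) / 2.
Proof.
  intros HP.
  assert (Hsorted : forall a b, 0 <= b <= a ->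
    rpow (rpow a (P / (P - 1)) + rpow b (P / (P - 1))) (P - 1)
    <= (rpow (a + b) P + rpow (Rabs (a - b)) P) / 2).
  { clear a b; intros a b [Hb Hba].
    destruct (Req_dec a 0) as [Ha0 | Ha0].
    { assert (b = 0) by lra; subst.
      rewrite Rplus_0_r, Rminus_0_r, Rabs_R0, !rpow_0, Rplus_0_r, rpow_0; lra. }
    set (y := b / a).
    assert (Hy : 0 <= y <= 1).
    { unfold y; split; [apply Rmult_le_pos; [lra | left; apply Rinv_0_lt_compat; lra] |].
      apply Rmult_le_reg_r with a; [lra | field_simplify; lra]. }
    pose proof (clarkson_unit P y HP Hy) as Hunit.
    assert (Hby : b = a * y) by (unfold y; field; lra); rewrite Hby.
    replace (a + a * y) with (a * (1 + y)) by ring.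
    replace (a - a * y) with (a * (1 - y)) by ring.
    rewrite Rabs_right, !rpow_mult by nra.
    rewrite <- (Rmult_1_r (rpow a (P / (P - 1)))) at 1; rewrite <- Rmult_plus_distr_l.
    pose proof (rpow_nonneg y (P / (P - 1))).
    rewrite rpow_mult, rpow_rpow by (try apply rpow_nonneg; lra).
    replace (P / (P - 1) * (P - 1)) with P by (field; lra).
    pose proof (rpow_nonneg a P); nra. }
  intros Ha Hb; destruct (Rle_dec b a) as [Hba | Hab]; [apply Hsorted; lra |].
  rewrite Rplus_comm, (Rplus_comm a b), Rabs_minus_sym; apply Hsorted; lra.
Qed.

(** * Real inequalities behind the "= 1" statements

    Both statements compare [pmean] of [(al, be) = (|x+y|, |x-y|)] with
    [lnorm] of [(a, b) = (|x|, |y|)], knowing the Hanner inequality for the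
    pair [(x+y, x-y)], whose sum and difference are [2x] and [2y]. *)

Lemma rpow_sum_double e a b : 0 <= a -> 0 <= b ->
  rpow (2 * a) e + rpow (2 * b) e = rpow 2 e * (rpow a e + rpow b e).
Proof. intros Ha Hb; rewrite !rpow_mult by lra; ring. Qed.

Lemma pmean_conj_as_power P al be : 1 < P -> 0 <= al -> 0 <= be ->
  pmean (P / (P - 1)) al be
  = rpow (rpow ((rpow al (P / (P - 1)) + rpow be (P / (P - 1))) / 2) (P - 1)) (1 / P).
Proof.
  intros HP Hal Hbe; unfold pmean; rewrite rpow_rpow.
  - f_equal; field; lra.
  - pose proof (rpow_nonneg al (P / (P - 1))); pose proof (rpow_nonneg be (P / (P - 1))); lra.
Qed.

(** Part (i): for [1 < t <= 2], [(al+be)^t + |al-be|^t <= (2a)^t + (2b)^t]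
    forces [M_t'(al, be) <= ||(a,b)||_t] (Clarkson-type inequality for [(al, be)]). *)
Lemma pmean_conj_le_lnorm t al be a b : 1 < t <= 2 ->
  0 <= al -> 0 <= be -> 0 <= a -> 0 <= b ->
  rpow (al + be) t + rpow (Rabs (al - be)) t <= rpow (2 * a) t + rpow (2 * b) t ->
  pmean (t / (t - 1)) al be <= lnorm t a b.
Proof.
  intros Ht Hal Hbe Ha Hb Hhanner.
  rewrite pmean_conj_as_power by lra; unfold lnorm.
  pose proof (clarkson_ineq t al be Ht Hal Hbe) as Hcl.
  rewrite rpow_sum_double, (rpow_two_split t) in Hhanner by assumption.
  set (S := rpow al (t / (t - 1)) + rpow be (t / (t - 1))) in *.
  assert (HS : 0 <= S)
    by (pose proof (rpow_nonneg al (t / (t - 1))); pose proof (rpow_nonneg be (t / (t - 1)));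
        unfold S; lra).
  assert (H2 : 0 < rpow 2 (t - 1)) by (apply rpow_gt0; lra).
  apply rpow_le; [split; [apply rpow_nonneg |] | apply Rdiv_lt_0_compat; lra].
  rewrite rpow_div by lra.
  apply Rmult_le_reg_r with (rpow 2 (t - 1)); [exact H2 |].
  field_simplify; lra.
Qed.

Lemma sum_diff_abs_pair al be P : 0 <= al -> 0 <= be ->
  rpow ((al + be) + Rabs (al - be)) P + rpow (Rabs ((al + be) - Rabs (al - be))) P
  = rpow (2 * al) P + rpow (2 * be) P.
Proof.
  intros Hal Hbe; destruct (Rle_dec be al) as [Hba | Hab].
  - rewrite (Rabs_right (al - be)) by lra.
    replace (al + be + (al - be)) with (2 * al) by ring.
    replace (al + be - (al - be)) with (2 * be) by ring.
    rewrite Rabs_right by lra; reflexivity.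
  - rewrite (Rabs_left (al - be)) by lra.
    replace (al + be + - (al - be)) with (2 * be) by ring.
    replace (al + be - - (al - be)) with (2 * al) by ring.
    rewrite Rabs_right by lra; ring.
Qed.

(** Part (ii): for [r >= 2], [(2a)^r + (2b)^r <= (al+be)^r + |al-be|^r]
    forces [||(a,b)||_r <= M_r'(al, be)] (Clarkson-type inequality with [P = r']
    for the pair [(al+be, |al-be|)]). *)
Lemma lnorm_le_pmean_conj r al be a b : 2 <= r ->
  0 <= al -> 0 <= be -> 0 <= a -> 0 <= b ->
  rpow (2 * a) r + rpow (2 * b) r <= rpow (al + be) r + rpow (Rabs (al - be)) r ->
  lnorm r a b <= pmean (r / (r - 1)) al be.
Proof.
  intros Hr Hal Hbe Ha Hb Hhanner.
  set (P := r / (r - 1)).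
  assert (HP : 1 < P <= 2).
  { unfold P; split.
    - apply Rmult_lt_reg_r with (r - 1); [lra | field_simplify; lra].
    - apply Rmult_le_reg_r with (r - 1); [lra | field_simplify; lra]. }
  assert (HPr : P / (P - 1) = r) by (unfold P; field; lra).
  pose proof (clarkson_ineq P (al + be) (Rabs (al - be)) HP ltac:(lra) (Rabs_pos _)) as Hcl.
  rewrite HPr, sum_diff_abs_pair, rpow_sum_double, (rpow_two_split P) in Hcl by assumption.
  rewrite rpow_sum_double in Hhanner by assumption.
  set (U := rpow (al + be) r + rpow (Rabs (al - be)) r) in *.
  set (T := rpow a r + rpow b r) in *.
  set (S := rpow al P + rpow be P) in *.
  assert (HT : 0 <= T)
    by (pose proof (rpow_nonneg a r); pose proof (rpow_nonneg b r); unfold T; lra).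
  assert (H2 : 0 < rpow 2 (P - 1)) by (apply rpow_gt0; lra).
  assert (H2r : 0 < rpow 2 r) by (apply rpow_gt0; lra).
  assert (HTU : rpow (rpow 2 r * T) (P - 1) <= rpow U (P - 1))
    by (apply rpow_le; [split; [apply Rmult_le_pos |] |]; lra).
  rewrite rpow_mult, rpow_rpow, (rpow_two_split (r * (P - 1))) in HTU by lra.
  replace (r * (P - 1) - 1) with (P - 1) in HTU by (unfold P; field; lra).
  unfold pmean, lnorm; fold S T.
  replace (1 / r) with ((P - 1) * (1 / P)) by (unfold P; field; lra).
  rewrite <- rpow_rpow by exact HT.
  apply rpow_le; [split; [apply rpow_nonneg |] | apply Rdiv_lt_0_compat; lra].
  apply Rmult_le_reg_l with (2 * rpow 2 (P - 1)); [lra |]; lra.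
Qed.

(** * Elementary facts on the abstract normed space *)

Section NormedSpaceFacts.
Variable X : NormedSpace.

Lemma vadd_0l (x : X) : vadd X (vzero X) x = x.
Proof. rewrite vadd_comm; apply vadd_0. Qed.

Lemma vscal_0 (x : X) : vscal X 0 x = vzero X.
Proof.
  set (s := vscal X 0 x).
  assert (E : s = vadd X s s) by (unfold s; rewrite <- vscal_distr_r; f_equal; ring).
  rewrite <- (vadd_opp X s); rewrite E at 2.
  rewrite <- vadd_assoc, vadd_opp, vadd_0; reflexivity.
Qed.

Lemma vopp_scal (x : X) : vopp X x = vscal X (-1) x.
Proof.
  assert (E : vadd X x (vscal X (-1) x) = vzero X).
  { rewrite <- (vscal_1 X x) at 1; rewrite <- vscal_distr_r.
    replace (1 + -1) with 0 by ring; apply vscal_0. }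
  rewrite <- (vadd_0 X (vopp X x)), <- E, vadd_assoc.
  rewrite (vadd_comm X (vopp X x) x), vadd_opp, vadd_0l; reflexivity.
Qed.

Lemma vnorm_zero : vnorm X (vzero X) = 0.
Proof. rewrite <- (vscal_0 (vzero X)), vnorm_scal, Rabs_R0; ring. Qed.

Lemma vnorm_opp (x : X) : vnorm X (vopp X x) = vnorm X x.
Proof. rewrite vopp_scal, vnorm_scal, Rabs_left by lra; ring. Qed.

Lemma vnorm_nonneg (x : X) : 0 <= vnorm X x.
Proof.
  pose proof (vnorm_triangle X x (vopp X x)) as H.
  rewrite vadd_opp, vnorm_zero, vnorm_opp in H; lra.
Qed.

Lemma vnorm_pos (x : X) : x <> vzero X -> 0 < vnorm X x.
Proof.
  intros Hx; destruct (vnorm_nonneg x) as [H | H]; [exact H |].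
  exfalso; apply Hx, vnorm_eq0; auto.
Qed.

Lemma vsub_scal (x y : X) : vsub X x y = vadd X x (vscal X (-1) y).
Proof. unfold vsub; rewrite vopp_scal; reflexivity. Qed.

Lemma vsub_0l (y : X) : vnorm X (vsub X (vzero X) y) = vnorm X y.
Proof. unfold vsub; rewrite vadd_0l; apply vnorm_opp. Qed.

Lemma vadd_sum_diff (x y : X) : vadd X (vadd X x y) (vsub X x y) = vscal X 2 x.
Proof.
  rewrite vsub_scal, <- vadd_assoc, (vadd_assoc X y x), (vadd_comm X y x).
  rewrite <- vadd_assoc, (vadd_assoc X x x).
  rewrite <- (vscal_1 X x) at 1 2; rewrite <- (vscal_1 X y) at 1.
  rewrite <- !vscal_distr_r; replace (1 + -1) with 0 by ring.
  rewrite vscal_0, vadd_0; f_equal; ring.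
Qed.

Lemma vsub_sum_diff (x y : X) : vsub X (vadd X x y) (vsub X x y) = vscal X 2 y.
Proof.
  rewrite !vsub_scal, vscal_distr_l, vscal_assoc.
  rewrite <- (vscal_1 X x) at 1; rewrite <- (vscal_1 X y) at 1.
  rewrite <- vadd_assoc, (vadd_assoc X (vscal X 1 y) (vscal X (-1) x)).
  rewrite (vadd_comm X (vscal X 1 y) (vscal X (-1) x)), <- vadd_assoc.
  rewrite (vadd_assoc X (vscal X 1 x)).
  rewrite <- !vscal_distr_r; replace (1 + -1) with 0 by ring.
  rewrite vscal_0, vadd_0l; f_equal; ring.
Qed.

Lemma hanner_t_sum_diff t (x y : X) : hanner_t X t ->
  rpow (vnorm X (vadd X x y) + vnorm X (vsub X x y)) t
  + rpow (Rabs (vnorm X (vadd X x y) - vnorm X (vsub X x y))) t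
  <= rpow (2 * vnorm X x) t + rpow (2 * vnorm X y) t.
Proof.
  intros HH; pose proof (HH (vadd X x y) (vsub X x y)) as H.
  rewrite vadd_sum_diff, vsub_sum_diff, !vnorm_scal, Rabs_right in H by lra; lra.
Qed.

Lemma hanner_r_sum_diff r (x y : X) : hanner_r X r ->
  rpow (2 * vnorm X x) r + rpow (2 * vnorm X y) r
  <= rpow (vnorm X (vadd X x y) + vnorm X (vsub X x y)) r
     + rpow (Rabs (vnorm X (vadd X x y) - vnorm X (vsub X x y))) r.
Proof.
  intros HH; pose proof (HH (vadd X x y) (vsub X x y)) as H.
  rewrite vadd_sum_diff, vsub_sum_diff, !vnorm_scal, Rabs_right in H by lra; lra.
Qed.

End NormedSpaceFacts.

(** * Reduction of the constants to scalar inequalities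

    For a space satisfying the Hanner inequality in the direction matching
    the constant and containing an isometric copy of the real line, a
    constant [K] is valid iff an inequality between real numbers holds:
    the Hanner inequality bounds the power mean of [|x+y|, |x-y|] by the same
    expression in [|x|+|y|, ||x|-|y||], which is attained on a line.  The
    constants are therefore the same for every such space, e.g. for [X]
    and for [C]. *)

Definition hanner_ge {V : Type} (add sub : V -> V -> V) (nrm : V -> R) (e : R) : Prop :=
  forall x y, rpow (nrm (add x y)) e + rpow (nrm (sub x y)) e >=
              rpow (nrm x + nrm y) e + rpow (Rabs (nrm x - nrm y)) e.

Definition hanner_le {V : Type} (add sub : V -> V -> V) (nrm : V -> R) (e : R) : Prop :=
  forall x y, rpow (nrm (add x y)) e + rpow (nrm (sub x y)) e <=
              rpow (nrm x + nrm y) e + rpow (Rabs (nrm x - nrm y)) e.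

Definition real_K_valid (t p K : R) : Prop := forall a b, 0 <= a -> 0 <= b ->
  pmean p (a + b) (Rabs (a - b)) <= lnorm t a (Rabs K * b).

Definition real_Kstar_valid (r q K : R) : Prop := forall a b, 0 <= a -> 0 <= b ->
  lnorm r a (Rabs (/ K) * b) <= pmean q (a + b) (Rabs (a - b)).

Definition has_line {V : Type} (add sub : V -> V -> V) (scal : R -> V -> V) (nrm : V -> R) :=
  exists u, nrm u = 1 /\
  (forall a b, nrm (add (scal a u) (scal b u)) = Rabs (a + b)) /\
  (forall a b, nrm (sub (scal a u) (scal b u)) = Rabs (a - b)).

Section ScalarReduction.
Variables (V : Type) (add sub : V -> V -> V) (scal : R -> V -> V) (nrm : V -> R).
Hypothesis nrm_nonneg : forall x, 0 <= nrm x.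
Hypothesis nrm_scal : forall c x, nrm (scal c x) = Rabs c * nrm x.
Hypothesis line : has_line add sub scal nrm.

Lemma eval_on_line (Q : R -> R -> R -> R -> Prop) :
  (forall x y, Q (nrm (add x y)) (nrm (sub x y)) (nrm x) (nrm y)) ->
  forall a b, 0 <= a -> 0 <= b -> Q (a + b) (Rabs (a - b)) a b.
Proof.
  destruct line as [u [Hu [Hadd Hsub]]]; intros HQ a b Ha Hb.
  specialize (HQ (scal a u) (scal b u)).
  rewrite Hadd, Hsub, !nrm_scal, Hu, (Rabs_right (a + b)), (Rabs_right a), (Rabs_right b),
    !Rmult_1_r in HQ by lra.
  exact HQ.
Qed.

Lemma K_valid_iff_real t p K : 0 < p -> hanner_le add sub nrm p ->
  K_valid add sub scal nrm t p K <-> real_K_valid t p K.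
Proof.
  intros Hp HH; split.
  - intros HK a b Ha Hb.
    apply (eval_on_line (fun s d a b => pmean p s d <= lnorm t a (Rabs K * b))); auto.
    intros x y; rewrite <- nrm_scal; apply HK.
  - intros HR x y; rewrite nrm_scal.
    apply Rle_trans with (pmean p (nrm x + nrm y) (Rabs (nrm x - nrm y))); [| apply HR; auto].
    apply rpow_le; [| apply Rdiv_lt_0_compat; lra].
    pose proof (rpow_nonneg (nrm (add x y)) p); pose proof (rpow_nonneg (nrm (sub x y)) p).
    specialize (HH x y); lra.
Qed.

Lemma Kstar_valid_iff_real r q K : 0 < q -> hanner_ge add sub nrm q ->
  Kstar_valid add sub scal nrm r q K <-> real_Kstar_valid r q K.
Proof.
  intros Hq HH; split.
  - intros HK a b Ha Hb.
    apply (eval_on_line (fun s d a b => lnorm r a (Rabs (/ K) * b) <= pmean q s d)); auto.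
    intros x y; rewrite <- nrm_scal; apply Rge_le, HK.
  - intros HR x y; rewrite nrm_scal; apply Rle_ge.
    apply Rle_trans with (pmean q (nrm x + nrm y) (Rabs (nrm x - nrm y))); [apply HR; auto |].
    apply rpow_le; [| apply Rdiv_lt_0_compat; lra].
    pose proof (rpow_nonneg (nrm x + nrm y) q); pose proof (rpow_nonneg (Rabs (nrm x - nrm y)) q).
    specialize (HH x y); lra.
Qed.

End ScalarReduction.

Lemma least_constant_equiv (dom P Q : R -> Prop) (k : R) :
  (forall K, P K <-> Q K) ->
  (dom k /\ P k /\ forall k', dom k' -> P k' -> k <= k') <->
  (dom k /\ Q k /\ forall k', dom k' -> Q k' -> k <= k').
Proof.
  intros HPQ; split; intros [Hk [HPk Hmin]]; repeat split; auto; try apply HPQ; auto;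
    intros k' Hk' Hv; apply Hmin; auto; apply HPQ; auto.
Qed.

(** * The complex plane

    [C] contains a line and satisfies the [e]-Hanner inequality in both
    directions ([e <= 2] and [e >= 2]): squaring turns the four norms into
    [A +- c] and [A +- B] with [|c| <= B <= A] (parallelogram law and
    Cauchy-Schwarz), and the majorization lemmas apply with [g = e/2]. *)

Lemma cabs_nonneg z : 0 <= cabs z.
Proof. apply sqrt_pos. Qed.

Lemma cabs_sq z : cabs z * cabs z = fst z * fst z + snd z * snd z.
Proof. apply sqrt_sqrt; nra. Qed.

Lemma cabs_scal c z : cabs (cscal c z) = Rabs c * cabs z.
Proof.
  unfold cabs, cscal; simpl.
  replace (c * fst z * (c * fst z) + c * snd z * (c * snd z))
    with (Rsqr c * (fst z * fst z + snd z * snd z)) by (unfold Rsqr; ring).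
  rewrite sqrt_mult, sqrt_Rsqr_abs by (try apply Rle_0_sqr; nra); reflexivity.
Qed.

Lemma C_has_line : has_line cadd csub cscal cabs.
Proof.
  exists (1, 0); unfold cabs, cadd, csub, cscal; simpl; repeat split.
  - replace (1 * 1 + 0 * 0) with 1 by ring; apply sqrt_1.
  - intros a b; rewrite <- sqrt_Rsqr_abs; f_equal; unfold Rsqr; ring.
  - intros a b; rewrite <- sqrt_Rsqr_abs; f_equal; unfold Rsqr; ring.
Qed.

Lemma C_squared_norms z w :
  let A := cabs z * cabs z + cabs w * cabs w in
  let B := 2 * (cabs z * cabs w) in
  let c := 2 * (fst z * fst w + snd z * snd w) in
  cabs (cadd z w) * cabs (cadd z w) = A + c /\
  cabs (csub z w) * cabs (csub z w) = A - c /\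
  (cabs z + cabs w) * (cabs z + cabs w) = A + B /\
  Rabs (cabs z - cabs w) * Rabs (cabs z - cabs w) = A - B /\
  Rabs c <= B <= A.
Proof.
  intros A B c; unfold A, B, c.
  pose proof (cabs_sq z) as Hz; pose proof (cabs_sq w) as Hw.
  pose proof (cabs_nonneg z); pose proof (cabs_nonneg w).
  repeat split.
  - rewrite cabs_sq, Hz, Hw; unfold cadd; simpl; ring.
  - rewrite cabs_sq, Hz, Hw; unfold csub; simpl; ring.
  - ring.
  - rewrite <- Rabs_mult, Rabs_right; [ring | apply Rle_ge, Rle_0_sqr].
  - assert (Hcs : Rsqr (fst z * fst w + snd z * snd w) <= Rsqr (cabs z * cabs w)).
    { replace (Rsqr (cabs z * cabs w)) with ((cabs z * cabs z) * (cabs w * cabs w))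
        by (unfold Rsqr; ring).
      rewrite Hz, Hw; pose proof (Rle_0_sqr (fst z * snd w - snd z * fst w)).
      unfold Rsqr in *; nra. }
    apply Rsqr_le_abs_0 in Hcs.
    rewrite (Rabs_right (cabs z * cabs w)) in Hcs by (apply Rle_ge, Rmult_le_pos; auto).
    rewrite Rabs_mult, Rabs_right by lra; lra.
  - pose proof (Rle_0_sqr (cabs z - cabs w)); unfold Rsqr in *; nra.
Qed.

Lemma C_hanner_ge e : 0 < e <= 2 -> hanner_ge cadd csub cabs e.
Proof.
  intros He z w; destruct (C_squared_norms z w) as [E1 [E2 [E3 [E4 [Hc HB]]]]].
  pose proof (cabs_nonneg (cadd z w)); pose proof (cabs_nonneg (csub z w)).
  pose proof (cabs_nonneg z); pose proof (cabs_nonneg w); pose proof (Rabs_pos (cabs z - cabs w)).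
  rewrite (rpow_sq (cabs (cadd z w))), (rpow_sq (cabs (csub z w))),
    (rpow_sq (cabs z + cabs w)), (rpow_sq (Rabs (cabs z - cabs w))), E1, E2, E3, E4 by lra.
  apply Rle_ge, symmetric_sum_concave; auto; lra.
Qed.

Lemma C_hanner_le e : 2 <= e -> hanner_le cadd csub cabs e.
Proof.
  intros He z w; destruct (C_squared_norms z w) as [E1 [E2 [E3 [E4 [Hc HB]]]]].
  pose proof (cabs_nonneg (cadd z w)); pose proof (cabs_nonneg (csub z w)).
  pose proof (cabs_nonneg z); pose proof (cabs_nonneg w); pose proof (Rabs_pos (cabs z - cabs w)).
  rewrite (rpow_sq (cabs (cadd z w))), (rpow_sq (cabs (csub z w))),
    (rpow_sq (cabs z + cabs w)), (rpow_sq (Rabs (cabs z - cabs w))), E1, E2, E3, E4 by lra.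
  apply symmetric_sum_convex; auto; lra.
Qed.

Lemma X_has_line (X : NormedSpace) : (exists x : X, x <> vzero X) ->
  has_line (vadd X) (vsub X) (vscal X) (vnorm X).
Proof.
  intros [x0 Hx0]; pose proof (vnorm_pos X x0 Hx0) as Hn.
  assert (Hinv : Rabs (/ vnorm X x0) = / vnorm X x0)
    by (apply Rabs_right, Rle_ge; left; apply Rinv_0_lt_compat; exact Hn).
  exists (vscal X (/ vnorm X x0) x0); repeat split.
  - rewrite vnorm_scal, Hinv; field; lra.
  - intros a b; rewrite <- (vscal_distr_r X), !vnorm_scal, Hinv; field; lra.
  - intros a b; rewrite vsub_scal, (vscal_assoc X (-1) b), <- (vscal_distr_r X), !vnorm_scal, Hinv.
    replace (a + -1 * b) with (a - b) by ring; field; lra.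
Qed.

Lemma pmean_diag p u : p <> 0 -> 0 <= u -> pmean p u u = u.
Proof.
  intros Hp Hu; unfold pmean; replace ((rpow u p + rpow u p) / 2) with (rpow u p) by field.
  rewrite rpow_rpow by exact Hu; replace (p * (1 / p)) with 1 by (field; exact Hp).
  apply rpow_1; exact Hu.
Qed.

Lemma lnorm_0l t v : t <> 0 -> 0 <= v -> lnorm t 0 v = v.
Proof.
  intros Ht Hv; unfold lnorm; rewrite rpow_0, Rplus_0_l, rpow_rpow by exact Hv.
  replace (t * (1 / t)) with 1 by (field; exact Ht); apply rpow_1; exact Hv.
Qed.

(** Testing a constant at [x = 0] and [y <> 0] shows that it is at least 1:
    [|y| <= K |y|], resp. [|y|/K <= |y|]. *)
Lemma K_valid_ge_one (X : NormedSpace) t p K : (exists x : X, x <> vzero X) ->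
  t <> 0 -> p <> 0 -> 0 <= K -> K_valid (vadd X) (vsub X) (vscal X) (vnorm X) t p K -> 1 <= K.
Proof.
  intros [y Hy] Ht Hp HK Hv; pose proof (vnorm_pos X y Hy) as Hn.
  specialize (Hv (vzero X) y).
  rewrite vadd_0l, vsub_0l, vnorm_zero, vnorm_scal, Rabs_right in Hv by lra.
  change (pmean p (vnorm X y) (vnorm X y) <= lnorm t 0 (K * vnorm X y)) in Hv.
  rewrite pmean_diag, lnorm_0l in Hv by (assumption || lra || (apply Rmult_le_pos; lra)).
  apply Rmult_le_reg_r with (vnorm X y); lra.
Qed.

Lemma Kstar_valid_ge_one (X : NormedSpace) r q K : (exists x : X, x <> vzero X) ->
  r <> 0 -> q <> 0 -> 0 < K -> Kstar_valid (vadd X) (vsub X) (vscal X) (vnorm X) r q K -> 1 <= K.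
Proof.
  intros [y Hy] Hr Hq HK Hv; pose proof (vnorm_pos X y Hy) as Hn.
  assert (HiK : 0 < / K) by (apply Rinv_0_lt_compat; exact HK).
  specialize (Hv (vzero X) y).
  rewrite vadd_0l, vsub_0l, vnorm_zero, vnorm_scal, Rabs_right in Hv by lra.
  change (pmean q (vnorm X y) (vnorm X y) >= lnorm r 0 (/ K * vnorm X y)) in Hv.
  rewrite pmean_diag, lnorm_0l in Hv by (assumption || lra || (apply Rmult_le_pos; lra)).
  assert (/ K <= 1) by (apply Rmult_le_reg_r with (vnorm X y); lra).
  apply Rmult_le_reg_r with (/ K); [exact HiK |]; rewrite Rinv_r; lra.
Qed.

Lemma Kstar_equals_C (X : NormedSpace) (hX : exists x : X, x <> vzero X) t q :
  1 < t <= 2 -> hanner_t X t -> 2 <= q ->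
  forall k, is_Kstar_rq X q t k <-> is_Cstar q t k.
Proof.
  intros Ht HH Hq k; unfold is_Kstar_rq, is_Cstar, is_best_Kstar.
  apply least_constant_equiv; intros K.
  transitivity (real_Kstar_valid q t K).
  - apply Kstar_valid_iff_real;
      [apply vnorm_nonneg | apply vnorm_scal | apply X_has_line, hX | lra | exact HH].
  - symmetry; apply Kstar_valid_iff_real;
      [apply cabs_nonneg | apply cabs_scal | apply C_has_line | lra | apply C_hanner_ge; lra].
Qed.

Lemma K_equals_C (X : NormedSpace) (hX : exists x : X, x <> vzero X) r p :
  2 <= r -> hanner_r X r -> 1 < p <= 2 ->
  forall k, is_K_tp X p r k <-> is_C p r k.
Proof.
  intros Hr HH Hp k; unfold is_K_tp, is_C, is_best_K.
  apply least_constant_equiv; intros K.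
  transitivity (real_K_valid p r K).
  - apply K_valid_iff_real;
      [apply vnorm_nonneg | apply vnorm_scal | apply X_has_line, hX | lra | exact HH].
  - symmetry; apply K_valid_iff_real;
      [apply cabs_nonneg | apply cabs_scal | apply C_has_line | lra | apply C_hanner_le; lra].
Qed.

Lemma K_equals_one (X : NormedSpace) (hX : exists x : X, x <> vzero X) t p :
  1 < t <= 2 -> hanner_t X t -> 1 < p <= t / (t - 1) -> is_K_tp X t p 1.
Proof.
  intros Ht HH Hp; split; [lra | split].
  - intros x y; rewrite vscal_1.
    change (pmean p (vnorm X (vadd X x y)) (vnorm X (vsub X x y))
            <= lnorm t (vnorm X x) (vnorm X y)).
    eapply Rle_trans; [apply (pmean_monotone p (t / (t - 1))) |
                       apply pmean_conj_le_lnorm, hanner_t_sum_diff];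
      auto using vnorm_nonneg; lra.
  - intros k' Hk' Hv; apply (K_valid_ge_one X t p k'); auto; lra.
Qed.

Lemma Kstar_equals_one (X : NormedSpace) (hX : exists x : X, x <> vzero X) r q :
  2 <= r -> hanner_r X r -> r / (r - 1) <= q -> is_Kstar_rq X r q 1.
Proof.
  intros Hr HH Hq.
  assert (Hr' : 1 < r / (r - 1))
    by (apply Rmult_lt_reg_r with (r - 1); [lra | field_simplify; lra]).
  split; [lra | split].
  - intros x y; rewrite Rinv_1, vscal_1; apply Rle_ge.
    change (lnorm r (vnorm X x) (vnorm X y)
            <= pmean q (vnorm X (vadd X x y)) (vnorm X (vsub X x y))).
    eapply Rle_trans; [apply lnorm_le_pmean_conj, hanner_r_sum_diff |
                       apply (pmean_monotone (r / (r - 1)) q)];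
      auto using vnorm_nonneg; lra.
  - intros k' Hk' Hv; apply (Kstar_valid_ge_one X r q k'); auto; lra.
Qed.

Theorem proposition3p5 (X : NormedSpace) (hX : exists x : X, x <> vzero X) :
  (forall t : R, 1 < t <= 2 -> hanner_t X t ->
     (forall q : R, 2 <= q -> forall k : R, is_Kstar_rq X q t k <-> is_Cstar q t k)
     /\ (forall p : R, 1 < p <= t / (t - 1) -> is_K_tp X t p 1))
  /\
  (forall r : R, 2 <= r -> hanner_r X r ->
     (forall p : R, 1 < p <= 2 -> forall k : R, is_K_tp X p r k <-> is_C p r k)
     /\ (forall q : R, r / (r - 1) <= q -> is_Kstar_rq X r q 1)).
Proof.
  split; intros e He HH; split.
  - intros q Hq; apply Kstar_equals_C; assumption.
  - intros p Hp; apply K_equals_one; assumption.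
  - intros p Hp; apply K_equals_C; assumption.
  - intros q Hq; apply Kstar_equals_one; assumption.
Qed.
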